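(* Let $\alpha$ be a countably infinite order type and $S$ a sierpinskisation of $\alpha$ and $\omega$. Then the join-semilattice $I_{<\omega}(S)$ is isomorphic to a join-subsemilattice of $[\omega]^{<\omega}$ and belongs to $\mathbb{J}_\alpha$, i.e. the lattice $J(I_{<\omega}(S))$ of ideals of $I_{<\omega}(S)$ contains a chain of order type $I(\alpha)$.
   Context: A sierpinskisation of a countable order type $\alpha$ and $\omega$ is a poset $(S,\le)$ whose order is the intersection of two linear orders on $S$, one of type $\alpha$ and one of type $\omega$. $I_{<\omega}(S)$ is the set of finitely generated initial segments of $S$ ordered by inclusion (join $=$ union). $[\omega]^{<\omega}$ is the set of finite subsets of $\mathbb{N}$ ordered by inclusion. An ideal is a non-empty up-directed initial segment; $J(\cdot)$ is the set of ideals ordered by inclusion. $\mathbb{J}_\alpha$ is the class of join-semilattices $P$ with a least element such that $J(P)$ contains a chain of type $I(\alpha)$, where $I(\alpha)$ is the order type of the chain of initial segments of a chain of type $\alpha$. *)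

(* Sets are predicates (X : T -> Prop), compared with Leibniz
   equality (functional/propositional extensionality are available). *)
From Stdlib Require Import List Arith.
Import ListNotations.

Definition subset {T : Type} (X Y : T -> Prop) : Prop := forall x, X x -> Y x.
Definition union {T : Type} (X Y : T -> Prop) : T -> Prop := fun x => X x \/ Y x.

Definition linear_order {T : Type} (le : T -> T -> Prop) : Prop :=
  (forall x, le x x) /\
  (forall x y, le x y -> le y x -> x = y) /\
  (forall x y z, le x y -> le y z -> le x z) /\
  (forall x y, le x y \/ le y x).

Definition bijective {A B : Type} (f : A -> B) : Prop :=
  (forall x y, f x = f y -> x = y) /\ (forall b, exists a, f a = b).

Definition same_order_type {T U : Type} (leT : T -> T -> Prop)
  (leU : U -> U -> Prop) : Prop :=
  exists f : T -> U, bijective f /\ forall x y, leT x y <-> leU (f x) (f y).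

Definition countably_infinite (A : Type) : Prop :=
  exists h : nat -> A, bijective h.

(* The poset order of a sierpinskisation: intersection of two linear orders *)
Definition inter_order {T : Type} (le1 le2 : T -> T -> Prop) : T -> T -> Prop :=
  fun x y => le1 x y /\ le2 x y.

Definition initial_segment {T : Type} (le : T -> T -> Prop) (X : T -> Prop) : Prop :=
  forall x y, le x y -> X y -> X x.

Definition down_of {T : Type} (le : T -> T -> Prop) (s : list T) : T -> Prop :=
  fun x => exists y, In y s /\ le x y.

Definition fg_initial {T : Type} (le : T -> T -> Prop) (X : T -> Prop) : Prop :=
  exists s : list T, X = down_of le s.

Definition finite_nat (X : nat -> Prop) : Prop :=
  exists n, forall k, X k -> k < n.

Definition ideal {E : Type} (P : E -> Prop) (le : E -> E -> Prop)
  (D : E -> Prop) : Prop :=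
  (forall a, D a -> P a) /\
  (exists a, D a) /\
  (forall a b, P a -> le a b -> D b -> D a) /\
  (forall a b, D a -> D b -> exists c, D c /\ le a c /\ le b c).

(* Fix the isomorphisms f : (T, le1) -> alpha and g : (T, le2) -> omega.
   A finitely generated initial segment of S = (T, le1 /\ le2) lies below its
   generators in le2, so its image under g is finite; the image map commutes
   with unions and is injective since g is.  For an initial segment X of alpha,
   the finitely generated initial segments of S contained in f^-1(X) form an
   ideal; X is recovered from it through principal segments, which are
   contained in f^-1(X) because le1 refines into alpha along f. *)
From Stdlib Require Import List Arith Lia FunctionalExtensionality PropExtensionality.
Import ListNotations.

Lemma pred_ext {T : Type} (X Y : T -> Prop) : (forall x, X x <-> Y x) -> X = Y.
Proof.
  intros HXY. extensionality x. apply propositional_extensionality, HXY.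
Qed.

Section FinitelyGenerated.

Variables (T : Type) (le : T -> T -> Prop).

Lemma down_of_nil : down_of le [] = fun _ => False.
Proof.
  apply pred_ext. intros x. split; [intros [y [[] _]] | intros []].
Qed.

Lemma down_of_app (s t : list T) :
  down_of le (s ++ t) = union (down_of le s) (down_of le t).
Proof.
  apply pred_ext. intros x. unfold union, down_of. split.
  - intros [y [Hy Hxy]]. apply in_app_iff in Hy as [Hy|Hy]; [left|right]; eauto.
  - intros [[y [Hy Hxy]]|[y [Hy Hxy]]]; exists y; rewrite in_app_iff; auto.
Qed.

Lemma fg_initial_empty : fg_initial le (fun _ => False).
Proof. exists []. symmetry. apply down_of_nil. Qed.

Lemma fg_initial_union (I J : T -> Prop) :
  fg_initial le I -> fg_initial le J -> fg_initial le (union I J).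
Proof. intros [s ->] [t ->]. exists (s ++ t). symmetry. apply down_of_app. Qed.

Definition fg_below (X : T -> Prop) : (T -> Prop) -> Prop :=
  fun I => fg_initial le I /\ subset I X.

Lemma fg_below_ideal (X : T -> Prop) : ideal (fg_initial le) subset (fg_below X).
Proof.
  split; [|split; [|split]].
  - intros I [HI _]. exact HI.
  - exists (fun _ => False). split; [apply fg_initial_empty | intros x []].
  - intros I J HI HIJ [_ HJ]. split; [exact HI|]. intros x Hx. apply HJ, HIJ, Hx.
  - intros I J [HI HIX] [HJ HJX]. exists (union I J).
    split; [split|split].
    + apply fg_initial_union; assumption.
    + intros x [Hx|Hx]; auto.
    + intros x Hx. left. exact Hx.
    + intros x Hx. right. exact Hx.
Qed.

Lemma fg_below_mono (X Y : T -> Prop) :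
  subset X Y -> subset (fg_below X) (fg_below Y).
Proof.
  intros HXY I [HI HIX]. split; [exact HI|]. intros x Hx. apply HXY, HIX, Hx.
Qed.

Lemma fg_below_reflect (X Y : T -> Prop) :
  (forall x, le x x) -> initial_segment le X ->
  subset (fg_below X) (fg_below Y) -> subset X Y.
Proof.
  intros Hrefl HX HXY x Hx.
  assert (Hprinc : fg_below X (down_of le [x])).
  { split; [exists [x]; reflexivity|].
    intros z [y [[Hyx|[]] Hzy]]. subst y. exact (HX z x Hzy Hx). }
  apply (HXY _ Hprinc). exists x. split; [left; reflexivity | apply Hrefl].
Qed.

Definition image (g : T -> nat) (I : T -> Prop) : nat -> Prop :=
  fun n => exists x, I x /\ g x = n.

Lemma image_union (g : T -> nat) (I J : T -> Prop) :
  image g (union I J) = union (image g I) (image g J).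
Proof.
  apply pred_ext. intros n. unfold image, union. split.
  - intros [x [[Hx|Hx] <-]]; [left|right]; eauto.
  - intros [[x [Hx <-]]|[x [Hx <-]]]; exists x; auto.
Qed.

Lemma image_inj (g : T -> nat) (I J : T -> Prop) :
  (forall x y, g x = g y -> x = y) -> image g I = image g J -> I = J.
Proof.
  intros ginj E.
  assert (Hsub : forall I J, image g I = image g J -> subset I J).
  { intros I' J' E' x Hx.
    assert (Himg : image g J' (g x)) by (rewrite <- E'; exists x; auto).
    destruct Himg as [y [Hy Hyx]]. rewrite <- (ginj _ _ Hyx). exact Hy. }
  apply pred_ext. intros x. split; apply Hsub; auto.
Qed.

Lemma le_max_list (g : T -> nat) (s : list T) (y : T) :
  In y s -> g y <= fold_right max 0 (map g s).
Proof.
  induction s as [|a s IH]; simpl; [tauto|].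
  intros [->|Hy]; [lia|]. specialize (IH Hy). lia.
Qed.

Lemma image_fg_initial_finite (g : T -> nat) (I : T -> Prop) :
  (forall x y, le x y -> g x <= g y) -> fg_initial le I -> finite_nat (image g I).
Proof.
  intros gmon [s ->]. exists (S (fold_right max 0 (map g s))).
  intros k [x [[y [Hy Hxy]] <-]].
  pose proof (gmon _ _ Hxy). pose proof (le_max_list g s y Hy). lia.
Qed.

End FinitelyGenerated.

Lemma initial_segment_preimage {T U : Type} (leT : T -> T -> Prop)
  (leU : U -> U -> Prop) (f : T -> U) (X : U -> Prop) :
  (forall x y, leT x y -> leU (f x) (f y)) ->
  initial_segment leU X -> initial_segment leT (fun t => X (f t)).
Proof. intros fmon HX x y Hxy Hy. exact (HX _ _ (fmon _ _ Hxy) Hy). Qed.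

Lemma subset_preimage_surj {T U : Type} (f : T -> U) (X Y : U -> Prop) :
  (forall u, exists t, f t = u) ->
  subset (fun t => X (f t)) (fun t => Y (f t)) -> subset X Y.
Proof. intros fsurj HXY u Hu. destruct (fsurj u) as [t <-]. apply HXY, Hu. Qed.

Theorem lemma2p1
  (A : Type) (leA : A -> A -> Prop)
  (HleA : linear_order leA) (HA : countably_infinite A)
  (T : Type) (le1 le2 : T -> T -> Prop)
  (Hle1 : linear_order le1) (Hle2 : linear_order le2)
  (H1 : same_order_type le1 leA) (H2 : same_order_type le2 Nat.le) :
  let FG := fg_initial (inter_order le1 le2) in
  (* I_{<omega}(S) embeds as a join-subsemilattice of [omega]^{<omega} *)
  (exists phi : (T -> Prop) -> (nat -> Prop),
      (forall I, FG I -> finite_nat (phi I)) /\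
      (forall I J, FG I -> FG J -> phi (union I J) = union (phi I) (phi J)) /\
      (forall I J, FG I -> FG J -> phi I = phi J -> I = J)) /\
  (* J(I_{<omega}(S)) contains a chain of type I(alpha) *)
  (exists psi : (A -> Prop) -> ((T -> Prop) -> Prop),
      (forall X, initial_segment leA X -> ideal FG subset (psi X)) /\
      (forall X Y, initial_segment leA X -> initial_segment leA Y ->
         (subset X Y <-> subset (psi X) (psi Y)))).
Proof.
  intros FG.
  destruct H1 as [f [[_ fsurj] fmon]], H2 as [g [[ginj _] gmon]].
  destruct Hle1 as [refl1 _], Hle2 as [refl2 _].
  set (le := inter_order le1 le2).
  assert (fmon_le : forall x y, le x y -> leA (f x) (f y))
    by (intros x y [Hxy _]; apply fmon, Hxy).
  split.
  - exists (image T g). split; [|split].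
    + intros I. apply image_fg_initial_finite. intros x y [_ Hxy]. apply gmon, Hxy.
    + intros I J _ _. apply image_union.
    + intros I J _ _. apply image_inj, ginj.
  - exists (fun X => fg_below T le (fun t => X (f t))). split.
    + intros X _. apply fg_below_ideal.
    + intros X Y HX _. split.
      * intros HXY. apply fg_below_mono. intros t Ht. apply HXY, Ht.
      * intros Hpsi. apply (subset_preimage_surj f _ _ fsurj).
        apply (fg_below_reflect T le _ _ (fun x => conj (refl1 x) (refl2 x))).
        -- exact (initial_segment_preimage le leA f X fmon_le HX).
        -- exact Hpsi.
Qed.
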